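(* For every nonempty $J\subseteq\{1,\ldots,n\}$, the Laurent polynomial $q_J=t^{-\omega_J}\Delta_J(\tilde tZ)$ lies in $\mathbb{C}[z,t]$; its specialization at $t=0$ is $\pm$ the antidiagonal term of $p_J=\Delta_J(Z)$, its specialization at $t=1$ is $p_J$, and $q_J$ is invariant under the action of the subgroup $U\subseteq B$ of lower triangular unipotent matrices on $M_n\times\mathbb{C}$, i.e. $q_J(\Psi_\tau(u)\cdot Z,\tau)=q_J(Z,\tau)$ for all $u\in U$, $Z\in M_n$, $\tau\in\mathbb{C}$.
   Context: $M_n$ is the space of complex $n\times n$ matrices with coordinate ring $\mathbb{C}[z]=\mathbb{C}[z_{ij}:1\le i,j\le n]$; $Z=(z_{ij})$ is the generic matrix. $\omega_{ij}=3^{\,n-i-j}$ if $i+j\le n$ and $\omega_{ij}=0$ otherwise. $\tilde tZ$ denotes the matrix with entries $t^{\omega_{ij}}z_{ij}$. For $J=\{j_1<\cdots<j_k\}$, $\Delta_J(Z)$ is the minor with rows $1,\ldots,k$ and columns $J$, and $\omega_J=\sum_{r=1}^k\omega_{r,j_{k+1-r}}$ is the sum of the weights along the antidiagonal of the square submatrix of $\omega$ with rows $1,\ldots,k$ and columns $J$. $B$ is the group of invertible lower triangular matrices, acting on $M_n\times\mathbb{C}$ by $b\cdot(Z,\tau)=(\Psi_\tau(b)\cdot Z,\tau)$, where $\Psi_\tau(b)=(\tilde\tau_1^{-1}b\tilde\tau_1,\ldots,\tilde\tau_n^{-1}b\tilde\tau_n)$ with $\tilde\tau_j=\mathrm{diag}(\tau^{\omega_{1j}},\ldots,\tau^{\omega_{nj}})$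 for $\tau\ne0$, and for $\tau=0$, $\Psi_0(b)=(b_1,\ldots,b_n)$ with $b_j$ equal to $b$ with all entries in columns $1,\ldots,n-j$ strictly below the diagonal set to $0$; an $n$-tuple $(g_1,\ldots,g_n)$ of matrices acts on $Z$ columnwise, sending the $j$-th column $Z_j$ to $g_jZ_j$. *)

From HB Require Import structures.
From mathcomp Require Import all_boot all_order all_algebra.
From mathcomp Require Import mpoly.
From mathcomp Require Import complex.
From Stdlib Require Import Rdefinitions.
From mathcomp Require Import Rstruct.
Set Implicit Arguments. Unset Strict Implicit. Unset Printing Implicit Defensive.
Import Order.TTheory GRing.Theory Num.Theory.
Local Open Scope ring_scope.

Notation CC := (complex Rdefinitions.R).

(* Indices are 0-based: i : 'I_n stands for the paper's row i+1.
   omega i j = 3^(n - (i+1) - (j+1)) if (i+1)+(j+1) <= n, and 0 otherwise. *)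
Definition omega (n : nat) (i j : 'I_n) : nat :=
  if leq (addn (addn i j) 2) n then expn 3 (subn (subn (subn n 2) i) j) else 0%N.

Lemma card_set_ord_le (n : nat) (J : {set 'I_n}) : leq #|J| n.
Proof. by have := max_card (mem J); rewrite card_ord. Qed.

Definition rowJ (n : nat) (J : {set 'I_n}) (r : 'I_#|J|) : 'I_n :=
  widen_ord (card_set_ord_le J) r.
(* columns j_1 < ... < j_k : the elements of J in increasing order *)
Definition colJ (n : nat) (J : {set 'I_n}) (r : 'I_#|J|) : 'I_n := enum_val r.
Arguments rowJ {n} J r.
Arguments colJ {n} J r.

Definition DeltaJ (R : comNzRingType) (n : nat) (J : {set 'I_n}) (M : 'M[R]_n) : R :=
  \det (\matrix_(r, s) M (rowJ J r) (colJ J s)).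

Definition omegaJ (n : nat) (J : {set 'I_n}) : nat :=
  (\sum_(r < #|J|) omega (rowJ J r) (colJ J (rev_ord r)))%N.

(* Coordinate ring C[z] = C[z_ij] : variable z_ij is 'X_(mxvec_index i j). *)
Definition zring (n : nat) := {mpoly CC[n * n]}.

Definition genZ (n : nat) : 'M[zring n]_n :=
  \matrix_(i, j) 'X_(mxvec_index i j).

Definition tildeZ (n : nat) : 'M[{poly zring n}]_n :=
  \matrix_(i, j) ('X^(omega i j) * (genZ n i j)%:P).

Definition evalZt (n : nat) (q : {poly zring n}) (Z : 'M[CC]_n) (tau : CC) : CC :=
  (map_poly (fun p : zring n => p.@[fun k => mxvec Z 0 k]) q).[tau].

Definition tauj (n : nat) (tau : CC) (j : 'I_n) : 'M[CC]_n :=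
  diag_mx (\row_a (tau ^+ omega a j)).

(* Psi_tau(b) : an n-tuple (indexed by the column j) of matrices *)
Definition Psi (n : nat) (tau : CC) (b : 'M[CC]_n) : 'I_n -> 'M[CC]_n :=
  fun j =>
    if tau != 0 then invmx (tauj tau j) *m b *m tauj tau j
    else
      \matrix_(a, c) (if (leq (addn (addn c j) 2) n && leq c.+1 a) then 0 else b a c).

Definition colact (n : nat) (g : 'I_n -> 'M[CC]_n) (Z : 'M[CC]_n) : 'M[CC]_n :=
  \matrix_(a, j) (g j *m col j Z) a 0.

Definition lower_unipotent (n : nat) (u : 'M[CC]_n) : Prop :=
  (forall a c : 'I_n, leq a.+1 c -> u a c = 0) /\ (forall a : 'I_n, u a a = 1).

From HB Require Import structures.
From mathcomp Require Import all_boot all_order all_algebra all_fingroup.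
From mathcomp Require Import mpoly complex Rstruct zify.
Set Implicit Arguments. Unset Strict Implicit. Unset Printing Implicit Defensive.
Import GRing.Theory.
Local Open Scope ring_scope.

(* Expanding the minor of ~tZ over the permutations s of its k rows, the term of
   s carries the power t^(w s), w s = sum_r omega_(r, j_(s r)).  Since omega_ij
   triples whenever i + j decreases by one, moving a row of s onto the
   antidiagonal by a transposition strictly lowers w, so the antidiagonal
   permutation is the unique minimiser of w and w = omega_J there.  Hence
   q_J = t^(-omega_J) Delta_J(~tZ) is a polynomial whose constant term is the
   signed antidiagonal product.  For tau <> 0, conjugation by ~tau_j turns the
   action of Psi_tau(u) into left multiplication of ~tau Z by u, which fixes
   the minors on the top rows because u is lower unipotent; for tau = 0 only
   the antidiagonal term survives, and Psi_0(u) does not move those entries. *)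

Definition corner_weight (n m : nat) : nat :=
  if (m + 2 <= n)%N then (3 ^ (n - 2 - m))%N else 0%N.

Lemma corner_weight_gt0 n m : (m + 2 <= n)%N -> (0 < corner_weight n m)%N.
Proof. by move=> h; rewrite /corner_weight h expn_gt0. Qed.

Lemma corner_weight_ltn n m1 m2 :
  (m1 < m2)%N -> (3 * corner_weight n m2 <= corner_weight n m1)%N.
Proof.
rewrite /corner_weight => lt12; case: ifP => [h2|_]; last by rewrite muln0.
by rewrite ifT; [rewrite -expnS leq_exp2l //; lia | lia].
Qed.

Lemma corner_weight_exchange n m1 m2 m3 m4 :
  (m1 + 2 <= n)%N -> (m1 < m2)%N -> (m1 < m3)%N ->
  (corner_weight n m2 + corner_weight n m3 < corner_weight n m1 + corner_weight n m4)%N.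
Proof.
move=> /corner_weight_gt0 h1 /(corner_weight_ltn n) h2 /(corner_weight_ltn n) h3; lia.
Qed.

Definition rev_perm k : 'S_k := perm (@rev_ord_inj k).

Lemma rev_permE k (i : 'I_k) : rev_perm k i = rev_ord i.
Proof. by rewrite permE. Qed.

Lemma omega_corner_weight n (i j : 'I_n) : omega i j = corner_weight n (i + j)%N.
Proof. by rewrite /omega /corner_weight !subnDA. Qed.

Section PermWeight.
Variables (n k : nat) (c : 'I_k -> nat).
Hypothesis c_incr : {homo c : a b / (a < b)%N}.
Hypothesis c_room : forall s : 'I_k, (c s + (k - s) <= n)%N.

Definition perm_weight (s : 'S_k) : nat := (\sum_(r < k) corner_weight n (r + c (s r)))%N.

(* Swapping the two entries of [s] in the first row [P] where [s] leaves the
   antidiagonal moves that row onto the antidiagonal; the weight of the row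
   that is vacated dominates both new weights by a factor 3. *)
Lemma perm_weight_exchange s :
  s != rev_perm k -> exists s' : 'S_k, (perm_weight s' < perm_weight s)%N.
Proof.
move=> s_rev; have [i0 i0_off] : exists i0 : 'I_k, s i0 != rev_ord i0.
  apply/existsP; apply: contraR s_rev => /existsPn on_rev.
  by apply/eqP/permP => i; rewrite rev_permE; apply/eqP/negPn/on_rev.
case: (arg_minnP (P := fun i => s i != rev_ord i) val i0_off) => P P_off P_min.
have on_rev (x : 'I_k) : (x < P)%N -> s x = rev_ord x.
  by move=> xP; apply/eqP/negPn/negP => /P_min; rewrite leqNgt xP.
have sP_lt : (s P < rev_ord P)%N.
  rewrite ltn_neqAle (inj_eq val_inj) P_off leqNgt /=; apply/negP => gt.
  have x_lt : (rev_ord (s P) < P)%N by rewrite /=; have := ltn_ord (s P); lia.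
  have := on_rev _ x_lt; rewrite rev_ordK => /perm_inj eq_sP.
  by rewrite eq_sP ltnn in x_lt.
pose r := (s^-1)%g (rev_ord P); have s_r : s r = rev_ord P by rewrite permKV.
have P_lt_r : (P < r)%N.
  rewrite ltnNge leq_eqVlt negb_or; apply/andP; split.
    by apply/negP => /eqP/val_inj eq_rP; move: P_off; rewrite -{1}eq_rP s_r eqxx.
  apply/negP => r_lt; have := on_rev r r_lt; rewrite s_r => /rev_ord_inj eq_Pr.
  by move: r_lt; rewrite eq_Pr ltnn.
pose s' := (tperm P r * s)%g; exists s'.
have r_neq_P : r != P by rewrite neq_ltn P_lt_r orbT.
rewrite /perm_weight (bigD1 P) // [X in (_ < X)%N](bigD1 P) //=.
rewrite (bigD1 r r_neq_P) [X in (_ < _ + X)%N](bigD1 r r_neq_P) /=.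
rewrite !permM tpermL tpermR s_r.
rewrite (eq_bigr (fun i : 'I_k => corner_weight n (i + c (s i)))); last first.
  by move=> i /andP[iP ir]; rewrite permM tpermD // eq_sym.
have room : (P + c (s P) + 2 <= n)%N by have := c_room (s P); move: sP_lt => /=; lia.
have := @corner_weight_exchange n _ _ _ (r + c (rev_ord P)) room
  (_ : P + c (s P) < P + c (rev_ord P))%N (_ : P + c (s P) < r + c (s P))%N.
by rewrite ltn_add2l c_incr // ltn_add2r P_lt_r; lia.
Qed.

Lemma perm_weight_rev_lt s :
  s != rev_perm k -> (perm_weight (rev_perm k) < perm_weight s)%N.
Proof.
move=> s_rev; have [s' lt_s's] := perm_weight_exchange s_rev.
case: (arg_minnP perm_weight (isT : xpredT s)) => m _ m_min.
have -> : rev_perm k = m.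
  apply/eqP; rewrite eq_sym; apply: contraT => m_rev.
  have [m' lt_m'm] := perm_weight_exchange m_rev.
  by move: (m_min m' isT); rewrite leqNgt lt_m'm.
exact: leq_ltn_trans (m_min s' isT) lt_s's.
Qed.

Lemma perm_weight_rev_le s : (perm_weight (rev_perm k) <= perm_weight s)%N.
Proof. by have [-> // | /perm_weight_rev_lt/ltnW] := eqVneq s (rev_perm k). Qed.

End PermWeight.

Lemma sorted_ltn_nth_add (t : seq nat) (a d : nat) :
  sorted ltn t -> (a + d < size t)%N -> (nth 0 t a + d <= nth 0 t (a + d))%N.
Proof.
move=> t_sorted; elim: d => [|d IHd] lt_ad; first by rewrite !addn0.
have := IHd ltac:(lia).
have := sorted_ltn_nth ltn_trans 0%N t_sorted (a + d)%N (a + d.+1)%N.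
rewrite !inE => /(_ ltac:(lia) lt_ad ltac:(lia)); rewrite addnS; lia.
Qed.

Section Minor.
Variables (n : nat) (J : {set 'I_n}).
Local Notation k := #|J|.
Local Notation cols := [seq val j | j <- enum J].

Lemma sorted_cols : sorted ltn cols.
Proof.
apply: (subseq_sorted ltn_trans (s2 := [seq val j | j <- enum 'I_n])).
  by apply: map_subseq; rewrite {1}/enum_mem enumT; apply: filter_subseq.
by rewrite val_enum_ord iota_ltn_sorted.
Qed.

Lemma colJE (s : 'I_k) : val (colJ J s) = nth 0%N cols s.
Proof.
by rewrite /colJ (enum_val_nth (enum_val s)) (nth_map (enum_val s)) // -cardE.
Qed.

Lemma colJ_incr : {homo (fun s : 'I_k => val (colJ J s)) : a b / (a < b)%N}.
Proof.
move=> a b ab; rewrite !colJE.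
by apply: (sorted_ltn_nth ltn_trans 0%N sorted_cols); rewrite // inE size_map -cardE.
Qed.

Lemma colJ_room (s : 'I_k) : (colJ J s + (k - s) <= n)%N.
Proof.
have k_gt0 : (0 < k)%N by apply: leq_ltn_trans (ltn_ord s).
have last_lt : (k.-1 < k)%N by rewrite prednK.
have s_le : (s <= k.-1)%N by rewrite -ltnS prednK.
have := @sorted_ltn_nth_add _ s (k.-1 - s) sorted_cols.
rewrite subnKC // size_map -cardE => /(_ last_lt).
have := ltn_ord (colJ J (Ordinal last_lt)); rewrite !colJE /=.
move: (nth _ _ s) (nth _ _ k.-1) (ltn_ord s) => x y; lia.
Qed.

Lemma rev_colJ_room (r : 'I_k) : (r + colJ J (rev_ord r) < n)%N.
Proof.
by have := colJ_room (rev_ord r); rewrite /= subKn ?ltn_ord // addnS addnC.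
Qed.

Definition minor_term (R : comNzRingType) (M : 'M[R]_n) (s : 'S_k) : R :=
  (-1) ^+ s * \prod_(r < k) M (rowJ J r) (colJ J (s r)).

Lemma DeltaJE (R : comNzRingType) (M : 'M[R]_n) :
  DeltaJ J M = \sum_(s : 'S_k) minor_term M s.
Proof.
apply: eq_bigr => s _; congr (_ * _); apply: eq_bigr => r _; by rewrite mxE.
Qed.

Lemma minor_term_map (R S : comNzRingType) (f : {rmorphism R -> S}) M s :
  minor_term (map_mx f M) s = f (minor_term M s).
Proof.
rewrite rmorphM rmorph_sign rmorph_prod; congr (_ * _).
by apply: eq_bigr => r _; rewrite mxE.
Qed.

Lemma DeltaJ_map (R S : comNzRingType) (f : {rmorphism R -> S}) M :
  DeltaJ J (map_mx f M) = f (DeltaJ J M).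
Proof.
by rewrite !DeltaJE rmorph_sum; apply: eq_bigr => s _; rewrite minor_term_map.
Qed.

Local Notation weight := (perm_weight n (fun s : 'I_k => val (colJ J s))).

Lemma omegaJ_rev : omegaJ J = weight (rev_perm k).
Proof. by apply: eq_bigr => r _; rewrite rev_permE omega_corner_weight. Qed.

Lemma omegaJ_le_weight s : (omegaJ J <= weight s)%N.
Proof.
by rewrite omegaJ_rev; apply: perm_weight_rev_le; [apply: colJ_incr | apply: colJ_room].
Qed.

Lemma omegaJ_lt_weight s : s != rev_perm k -> (omegaJ J < weight s)%N.
Proof.
by rewrite omegaJ_rev; apply: perm_weight_rev_lt; [apply: colJ_incr | apply: colJ_room].
Qed.

Definition qJ : {poly zring n} :=
  \sum_(s : 'S_k) (minor_term (genZ n) s)%:P * 'X^(weight s - omegaJ J).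

Lemma minor_term_tildeZ s :
  minor_term (tildeZ n) s = 'X^(weight s) * (minor_term (genZ n) s)%:P.
Proof.
rewrite /minor_term (eq_bigr (fun r => 'X^(omega (rowJ J r) (colJ J (s r)))
  * (genZ n (rowJ J r) (colJ J (s r)))%:P)); last by move=> r _; rewrite mxE.
rewrite big_split /= prodrXr -rmorph_prod rmorphM rmorph_sign mulrCA.
by congr (_ * (_ * _)); congr ('X^_); apply: eq_bigr => r _; rewrite omega_corner_weight.
Qed.

Lemma DeltaJ_tildeZ : DeltaJ J (tildeZ n) = 'X^(omegaJ J) * qJ.
Proof.
rewrite DeltaJE /qJ mulr_sumr; apply: eq_bigr => s _.
by rewrite minor_term_tildeZ mulrCA -exprD subnKC ?omegaJ_le_weight // mulrC.
Qed.

Lemma qJ_at0 : qJ.[0] = minor_term (genZ n) (rev_perm k).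
Proof.
rewrite /qJ horner_sum (bigD1 (rev_perm k)) //= big1 ?addr0 => [|s s_rev].
  by rewrite hornerCM hornerXn omegaJ_rev subnn expr0 mulr1.
have := omegaJ_lt_weight s_rev.
by rewrite hornerCM hornerXn -subn_gt0 => /prednK <-; rewrite expr0n mulr0.
Qed.

Lemma qJ_at0_antidiag :
  qJ.[0] = ((-1) ^+ rev_perm k : CC) *: \prod_(r < k) genZ n (rowJ J r) (colJ J (rev_ord r)).
Proof.
rewrite qJ_at0 /minor_term; under eq_bigr do rewrite rev_permE.
by case: odd_perm; rewrite ?expr0 ?expr1 ?scale1r ?mul1r ?scaleN1r ?mulN1r.
Qed.

Lemma qJ_at1 : qJ.[1] = DeltaJ J (genZ n).
Proof.
have -> : genZ n = map_mx (horner_eval 1) (tildeZ n).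
  by apply/matrixP => i j; rewrite !mxE horner_evalE hornerM hornerXn hornerC expr1n mul1r.
by rewrite DeltaJ_map DeltaJ_tildeZ /= horner_evalE hornerM hornerXn expr1n mul1r.
Qed.

Definition evalZ (Z : 'M[CC]_n) : zring n -> CC := meval (fun i => mxvec Z 0 i).

Lemma map_evalZ_genZ Z : map_mx (evalZ Z) (genZ n) = Z.
Proof. by apply/matrixP => i j; rewrite !mxE /evalZ mevalXU mxvecE. Qed.

Lemma evalZ_minor_term Z s : evalZ Z (minor_term (genZ n) s) = minor_term Z s.
Proof. by rewrite -[in RHS](map_evalZ_genZ Z) (minor_term_map (evalZ Z)). Qed.

Definition tscale (tau : CC) (Z : 'M[CC]_n) : 'M[CC]_n :=
  \matrix_(i, j) (tau ^+ omega i j * Z i j).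

Lemma evalZt_qJ Z tau : tau ^+ omegaJ J * evalZt qJ Z tau = DeltaJ J (tscale tau Z).
Proof.
pose f := horner_eval tau \o map_poly (evalZ Z).
have -> : tscale tau Z = map_mx f (tildeZ n).
  apply/matrixP => i j; rewrite !mxE /f /= horner_evalE rmorphM /= map_polyXn.
  by rewrite map_polyC hornerM hornerXn hornerC -[in LHS](map_evalZ_genZ Z) !mxE.
by rewrite DeltaJ_map DeltaJ_tildeZ /f /= horner_evalE rmorphM /= map_polyXn hornerM hornerXn.
Qed.

Lemma evalZt_at0 q Z : evalZt q Z 0 = evalZ Z q.[0].
Proof. by rewrite /evalZt -(rmorph0 (evalZ Z)) horner_map. Qed.

Lemma DeltaJ_lower_unipotent_mul u M :
  lower_unipotent u -> DeltaJ J (u *m M) = DeltaJ J M.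
Proof.
case=> u_upper0 u_diag.
pose uJ : 'M[CC]_k := \matrix_(r, a) u (rowJ J r) (rowJ J a).
have -> : DeltaJ J (u *m M) = \det (uJ *m \matrix_(r, s) M (rowJ J r) (colJ J s)).
  congr (\det _); apply/matrixP => r s; rewrite !mxE.
  rewrite (bigID (fun a : 'I_n => (a < k)%N)) /= [X in _ + X]big1 ?addr0 => [|a].
    by rewrite (big_ord_narrow (card_set_ord_le J)); apply: eq_bigr => a _; rewrite !mxE.
  by rewrite -leqNgt => k_le_a; rewrite u_upper0 ?mul0r // (leq_trans (ltn_ord r)).
rewrite det_mulmx det_trig; first by rewrite big1 ?mul1r // => r _; rewrite mxE u_diag.
by apply/is_trig_mxP => r s rs; rewrite mxE u_upper0.
Qed.

Lemma tscale_colact_Psi u Z tau :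
  tau != 0 -> tscale tau (colact (Psi tau u) Z) = u *m tscale tau Z.
Proof.
move=> tau0; apply/matrixP => a j.
have tau_unit : tauj tau j \in unitmx.
  by rewrite unitmxE det_diag unitfE; apply/prodf_neq0 => i _; rewrite mxE expf_neq0.
have -> : tscale tau (colact (Psi tau u) Z) a j = (tauj tau j *m (Psi tau u j *m col j Z)) a 0.
  by rewrite /tauj mul_diag_mx !mxE.
rewrite /Psi tau0 -!mulmxA mulKVmx // /tauj mul_diag_mx !mxE.
by apply: eq_bigr => c _; rewrite !mxE.
Qed.

(* At an antidiagonal position (r, j) of the minor, r + j < n, so the j-th
   matrix of [Psi 0 u] vanishes to the left of the diagonal in row r. *)
Lemma colact_Psi0_antidiag u Z (r : 'I_k) : lower_unipotent u ->
  colact (Psi 0 u) Z (rowJ J r) (colJ J (rev_ord r)) = Z (rowJ J r) (colJ J (rev_ord r)).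
Proof.
case=> u_upper0 u_diag; rewrite /colact /Psi eqxx !mxE.
rewrite (bigD1 (rowJ J r)) //= big1 ?addr0 => [|c c_r]; rewrite !mxE.
  by rewrite ltnn andbF u_diag mul1r.
have [c_lt|c_gt|/val_inj c_eq] := ltngtP c (rowJ J r); last by rewrite c_eq eqxx in c_r.
  rewrite ifT ?mul0r //; apply/andP; split => //.
  apply: leq_trans (rev_colJ_room r).
  by rewrite addn2 ltnS -addSn leq_add2r.
by rewrite andbF u_upper0 ?mul0r.
Qed.

Lemma qJ_invariant u Z tau : lower_unipotent u ->
  evalZt qJ (colact (Psi tau u) Z) tau = evalZt qJ Z tau.
Proof.
move=> u_unip; have [-> | tau0] := eqVneq tau 0.
  rewrite !evalZt_at0 qJ_at0 !evalZ_minor_term /minor_term.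
  by congr (_ * _); apply: eq_bigr => r _; rewrite rev_permE colact_Psi0_antidiag.
apply: (mulfI (expf_neq0 (omegaJ J) tau0)).
by rewrite !evalZt_qJ tscale_colact_Psi // DeltaJ_lower_unipotent_mul.
Qed.

End Minor.

Theorem mainTheorem3 (n : nat) (J : {set 'I_n}) :
  J != set0 ->
  exists q : {poly zring n},
    DeltaJ J (tildeZ n) = 'X^(omegaJ J) * q /\
    (exists s : CC, (s = 1 \/ s = -1) /\
       q.[0] = s *: \prod_(r < #|J|) genZ n (rowJ J r) (colJ J (rev_ord r))) /\
    q.[1] = DeltaJ J (genZ n) /\
    (forall (u : 'M[CC]_n), lower_unipotent u ->
       forall (Z : 'M[CC]_n) (tau : CC),
         evalZt q (colact (Psi tau u) Z) tau = evalZt q Z tau).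
Proof.
move=> _; exists (qJ J); split; first exact: DeltaJ_tildeZ.
split; last by split; [exact: qJ_at1 | move=> u u_unip Z tau; exact: qJ_invariant].
exists ((-1) ^+ rev_perm #|J|); split; last exact: qJ_at0_antidiag.
by case: odd_perm; [right | left].
Qed.
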